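(* For $\mathbf v\in\mathbb{R}^\infty$, let $h_{\mathbf v}(x)$ be the generating function of $\mathbb{F}^{\rm S}\mathbf v$ and $h_{-\mathbf v}(x)$ the generating function of $\mathbb{L}^{\rm S}\mathbf v$, where $\mathbb{F}^{\rm S}=(1,x(1+x))$ and $\mathbb{L}^{\rm S}=(1+2x,x(1+x))$. Let $C(x)=\frac{1-\sqrt{1-4x}}{2x}$ and $M(x)=\frac{1-x-\sqrt{(1-x)^2-4x^2}}{2x^2}$. Then: (a) $h_{\mathbf v}(xC(x))=\frac{1}{1+2xC(x)}\,h_{-\mathbf v}(xC(x))$; (b) $h_{-\mathbf v}\!\left(x+\frac{x^2}{1-x}M\!\left(\frac{x}{1-x}\right)\right)=\left(1+2x+\frac{2x^2}{1-x}M\!\left(\frac{x}{1-x}\right)\right)h_{\mathbf v}\!\left(x+\frac{x^2}{1-x}M\!\left(\frac{x}{1-x}\right)\right)$.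
   Context: $\mathbb{R}^\infty$ is the space of real column vectors, identified with their generating functions. For formal power series $g(x)$ and $f(x)$ with $f(0)=0$, $(g(x),f(x))$ denotes the infinite lower triangular matrix whose $j$-th column has generating function $g(x)f(x)^j$; it maps a vector with generating function $U(x)$ to one with generating function $g(x)U(f(x))$. *)

From mathcomp Require Import all_boot all_order all_algebra.
Set Implicit Arguments. Unset Strict Implicit. Unset Printing Implicit Defensive.
Import Order.TTheory GRing.Theory Num.Theory.
Local Open Scope ring_scope.

Section FPS.
Variable R : fieldType.

(* a formal power series = its coefficient sequence; also a vector of R^oo
   identified with its generating function *)
Definition fps := nat -> R.

Definition fps_const (c : R) : fps := fun n => if n == 0%N then c else 0.
Definition fps_X : fps := fun n => if n == 1%N then 1 else 0.
Definition fps_add (f g : fps) : fps := fun n => f n + g n.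
Definition fps_opp (f : fps) : fps := fun n => - f n.
Definition fps_scale (c : R) (f : fps) : fps := fun n => c * f n.
Definition fps_mul (f g : fps) : fps :=
  fun n => \sum_(i < n.+1) f i * g (n - i)%N.
Definition fps_pow (f : fps) (k : nat) : fps := iter k (fps_mul f) (fps_const 1).
(* composition g(f(x)); meaningful when f 0 = 0 (then f^k has order >= k) *)
Definition fps_comp (g f : fps) : fps :=
  fun n => \sum_(k < n.+1) g k * fps_pow f k n.
Definition fps_divX (f : fps) : fps := fun n => f n.+1.

(* multiplicative inverse of a series with invertible constant term *)
Fixpoint inv_coefs (f : fps) (n : nat) : seq R :=
  match n with
  | 0 => [:: (f 0%N)^-1]
  | m.+1 => let s := inv_coefs f m in
      rcons s (- (f 0%N)^-1 * \sum_(k < m.+1) f k.+1 * nth 0 s (m - k)%N)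
  end.
Definition fps_inv (f : fps) : fps := fun n => nth 0 (inv_coefs f n) n.

(* formal binomial series (1+u)^(1/2) = sum_n binom(1/2,n) u^n *)
Definition sqrt1p_series : fps :=
  fun n => (\prod_(i < n) (2^-1 - i%:R)) / (n`!)%:R.
(* formal square root of a series with constant term 1 *)
Definition fps_sqrt (f : fps) : fps :=
  fps_comp sqrt1p_series (fps_add f (fps_opp (fps_const 1))).

(* C(x) = (1 - sqrt(1-4x)) / (2x) *)
Definition catalanC : fps :=
  fps_scale 2^-1 (fps_divX (fps_add (fps_const 1)
     (fps_opp (fps_sqrt (fps_add (fps_const 1) (fps_scale (-4) fps_X)))))).

(* M(x) = (1 - x - sqrt((1-x)^2 - 4x^2)) / (2x^2) *)
Definition motzkinM : fps :=
  let omx := fps_add (fps_const 1) (fps_opp fps_X) in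
  fps_scale 2^-1 (fps_divX (fps_divX (fps_add omx
     (fps_opp (fps_sqrt (fps_add (fps_pow omx 2)
                                  (fps_scale (-4) (fps_pow fps_X 2)))))))).

(* Riordan array (g, f) acting on a vector with generating function U:
   the result has generating function g(x) U(f(x)). *)
Definition riordan_apply (g f U : fps) : fps := fps_mul g (fps_comp U f).

Definition xx1 : fps := fps_mul fps_X (fps_add (fps_const 1) fps_X).
Definition FS_apply (v : fps) : fps := riordan_apply (fps_const 1) xx1 v.
Definition LS_apply (v : fps) : fps :=
  riordan_apply (fps_add (fps_const 1) (fps_scale 2 fps_X)) xx1 v.

Definition h_pos (v : fps) : fps := FS_apply v.
Definition h_neg (v : fps) : fps := LS_apply v.

End FPS.

From mathcomp Require Import all_boot all_order all_algebra.
From mathcomp Require Import zify.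
From Stdlib Require Import FunctionalExtensionality.
Import GRing.Theory Num.Theory.
Local Open Scope ring_scope.

(* As Riordan arrays, L^S = (1+2x, x(1+x)) is F^S = (1, x(1+x)) multiplied on
   the left by 1+2x, so h_{-v} = (1+2x) h_v.  Substituting any series y with
   y(0) = 0 gives h_{-v}(y) = (1+2y) h_v(y); (a) is the case y = xC(x) after
   inverting 1+2y, and (b) the case y = x + x^2/(1-x) M(x/(1-x)).  Of C and M
   only the vanishing constant term of y is used. *)

Section FormalPowerSeries.
Variable R : fieldType.
Implicit Types (a b c f g h y : fps R).

Lemma fps_ext a b : (forall n, a n = b n) -> a = b.
Proof. exact: functional_extensionality. Qed.

(* The n-th coefficient of a product only sees the factors' truncations at
   degree n, so the ring laws of fps_mul are inherited from {poly R}. *)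
Definition fps_trunc n a : {poly R} := \poly_(i < n.+1) a i.

Lemma coef_fps_trunc n a j : (j <= n)%N -> (fps_trunc n a)`_j = a j.
Proof. by move=> le_jn; rewrite coef_poly ltnS le_jn. Qed.

Lemma fps_mul_coef_poly a b (p q : {poly R}) n :
  (forall j, (j <= n)%N -> a j = p`_j) ->
  (forall j, (j <= n)%N -> b j = q`_j) ->
  fps_mul a b n = (p * q)`_n.
Proof.
move=> eq_ap eq_bq; rewrite coefM; apply: eq_bigr => i _.
by rewrite eq_ap ?eq_bq ?leq_subr // -ltnS.
Qed.

Lemma fps_mul_truncE n a b m :
  (m <= n)%N -> fps_mul a b m = (fps_trunc n a * fps_trunc n b)`_m.
Proof.
move=> le_mn; apply: fps_mul_coef_poly => j le_jm;
  by rewrite coef_fps_trunc // (leq_trans le_jm).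
Qed.

Lemma fps_mulA a b c : fps_mul a (fps_mul b c) = fps_mul (fps_mul a b) c.
Proof.
apply: fps_ext => n; set t := fps_trunc n.
have coef_t d j : (j <= n)%N -> d j = (t d)`_j by move=> ?; rewrite coef_fps_trunc.
transitivity ((t a * t b * t c)`_n).
  by rewrite -mulrA; apply: fps_mul_coef_poly => j ?; [exact: coef_t|exact: fps_mul_truncE].
by symmetry; apply: fps_mul_coef_poly => j ?; [exact: fps_mul_truncE|exact: coef_t].
Qed.

Lemma fps_mulC a b : fps_mul a b = fps_mul b a.
Proof. by apply: fps_ext => n; rewrite !(@fps_mul_truncE n) // mulrC. Qed.

Lemma fps_mulDl a b c :
  fps_mul (fps_add a b) c = fps_add (fps_mul a c) (fps_mul b c).
Proof.
apply: fps_ext => n; rewrite /fps_mul /fps_add -big_split.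
by apply: eq_bigr => i _; rewrite mulrDl.
Qed.

Lemma fps_mulZl k a b : fps_mul (fps_scale k a) b = fps_scale k (fps_mul a b).
Proof.
apply: fps_ext => n; rewrite /fps_mul /fps_scale mulr_sumr.
by apply: eq_bigr => i _; rewrite mulrA.
Qed.

Lemma fps_mul1l a : fps_mul (fps_const 1) a = a.
Proof.
apply: fps_ext => n; rewrite /fps_mul big_ord_recl big1 => [|i _].
  by rewrite /fps_const /= mul1r subn0 addr0.
by rewrite /fps_const /= mul0r.
Qed.

Lemma fps_mul_coef0 a b : fps_mul a b 0%N = a 0%N * b 0%N.
Proof. by rewrite /fps_mul big_ord1. Qed.

Lemma fps_mulX_coefS a k : fps_mul (fps_X R) a k.+1 = a k.
Proof.
rewrite /fps_mul !big_ord_recl big1 => [|i _]; last by rewrite /fps_X /= mul0r.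
by rewrite /fps_X /= mul0r mul1r add0r addr0 subSS subn0.
Qed.

Lemma fps_compD a b f :
  fps_comp (fps_add a b) f = fps_add (fps_comp a f) (fps_comp b f).
Proof.
apply: fps_ext => n; rewrite /fps_comp /fps_add -big_split.
by apply: eq_bigr => i _; rewrite mulrDl.
Qed.

Lemma fps_compZ k a f : fps_comp (fps_scale k a) f = fps_scale k (fps_comp a f).
Proof.
apply: fps_ext => n; rewrite /fps_comp /fps_scale mulr_sumr.
by apply: eq_bigr => i _; rewrite mulrA.
Qed.

Section Substitution.
Variable f : fps R.
Hypothesis f0 : f 0%N = 0.

Lemma fps_pow_coef_lt k m : (m < k)%N -> fps_pow f k m = 0.
Proof.
elim: k m => [//|k IHk] m lt_mk.
rewrite /fps_pow iterS -/(fps_pow f k) /fps_mul big1 // => i _.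
have [->|i_gt0] := posnP i; first by rewrite f0 mul0r.
by rewrite IHk ?mulr0 //; have := ltn_ord i; lia.
Qed.

Lemma fps_comp_widen g n N : (n < N)%N ->
  fps_comp g f n = \sum_(k < N) g k * fps_pow f k n.
Proof.
move=> lt_nN; rewrite /fps_comp (big_ord_widen N (fun k => g k * fps_pow f k n)) //.
rewrite big_mkcond; apply: eq_bigr => k _.
by case: ifPn => //; rewrite -leqNgt => lt_nk; rewrite fps_pow_coef_lt ?mulr0.
Qed.

Lemma fps_comp_mulX h : fps_comp (fps_mul (fps_X R) h) f = fps_mul f (fps_comp h f).
Proof.
apply: fps_ext => n.
have -> : fps_mul f (fps_comp h f) n = \sum_(k < n.+1) h k * fps_pow f k.+1 n.
  rewrite {1}/fps_mul.
  under eq_bigr => i _ do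
    rewrite (fps_comp_widen _ (n - i) n.+1) ?mulr_sumr ?ltnS ?leq_subr //.
  rewrite exchange_big; apply: eq_bigr => k _.
  rewrite /fps_pow iterS -/(fps_pow f k) /fps_mul mulr_sumr.
  by apply: eq_bigr => i _; rewrite mulrCA.
rewrite (fps_comp_widen _ n n.+2) // big_ord_recl fps_mul_coef0.
rewrite [fps_X R 0%N]/fps_X /= !mul0r add0r.
by apply: eq_bigr => i _; rewrite fps_mulX_coefS.
Qed.

Lemma fps_comp_mul1DX k h :
  fps_comp (fps_mul (fps_add (fps_const 1) (fps_scale k (fps_X R))) h) f
  = fps_mul (fps_add (fps_const 1) (fps_scale k f)) (fps_comp h f).
Proof.
by rewrite !fps_mulDl !fps_mulZl !fps_mul1l fps_compD fps_compZ fps_comp_mulX.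
Qed.

End Substitution.

Lemma size_inv_coefs g n : size (inv_coefs g n) = n.+1.
Proof. by elim: n => //= n IHn; rewrite size_rcons IHn. Qed.

Lemma nth_inv_coefs g i n : (i <= n)%N -> nth 0 (inv_coefs g n) i = fps_inv g i.
Proof.
move=> /subnKC <-; elim: (n - i)%N => [|d IHd]; first by rewrite addn0.
by rewrite addnS /= nth_rcons size_inv_coefs ltnS leq_addr.
Qed.

Lemma fps_inv_coefS g m : fps_inv g m.+1 =
  - (g 0%N)^-1 * \sum_(k < m.+1) g k.+1 * fps_inv g (m - k)%N.
Proof.
rewrite {1}/fps_inv /= nth_rcons size_inv_coefs ltnn eqxx.
by congr (_ * _); apply: eq_bigr => k _; rewrite nth_inv_coefs ?leq_subr.
Qed.

Lemma fps_mulV g : g 0%N != 0 -> fps_mul g (fps_inv g) = fps_const 1.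
Proof.
move=> g0_neq0; apply: fps_ext => -[|m]; first by rewrite fps_mul_coef0 mulfV.
rewrite /fps_mul big_ord_recl /= fps_inv_coefS ?subn0.
under eq_bigr => i _ do rewrite /bump /= subSS.
by rewrite mulrA mulrN mulfV // mulN1r addNr.
Qed.

Lemma fps_mulKf g h : g 0%N != 0 -> fps_mul (fps_inv g) (fps_mul g h) = h.
Proof. by move=> g0; rewrite fps_mulA [fps_mul _ g]fps_mulC fps_mulV ?fps_mul1l. Qed.

Lemma riordan_apply_mull a g f U :
  riordan_apply (fps_mul a g) f U = fps_mul a (riordan_apply g f U).
Proof. by rewrite /riordan_apply fps_mulA. Qed.

Lemma h_negE v :
  h_neg v = fps_mul (fps_add (fps_const 1) (fps_scale 2 (fps_X R))) (h_pos v).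
Proof.
rewrite /h_neg /h_pos /LS_apply /FS_apply -riordan_apply_mull.
by rewrite [fps_mul _ (fps_const 1)]fps_mulC fps_mul1l.
Qed.

Lemma h_neg_comp v y : y 0%N = 0 ->
  fps_comp (h_neg v) y
  = fps_mul (fps_add (fps_const 1) (fps_scale 2 y)) (fps_comp (h_pos v) y).
Proof. by move=> y0; rewrite h_negE fps_comp_mul1DX. Qed.

End FormalPowerSeries.

Theorem corollary4p6 (R : realFieldType) (v : fps R) :
  (let xC := fps_mul (fps_X R) (catalanC R) in
   fps_comp (h_pos v) xC
   = fps_mul (fps_inv (fps_add (fps_const 1) (fps_scale 2 xC)))
             (fps_comp (h_neg v) xC))
  /\
  (let inv1mx := fps_inv (fps_add (fps_const 1) (fps_opp (fps_X R))) in
   let T := fps_mul (fps_mul (fps_pow (fps_X R) 2) inv1mx)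
                    (fps_comp (motzkinM R) (fps_mul (fps_X R) inv1mx)) in
   let y := fps_add (fps_X R) T in
   fps_comp (h_neg v) y
   = fps_mul (fps_add (fps_add (fps_const 1) (fps_scale 2 (fps_X R)))
                      (fps_scale 2 T))
             (fps_comp (h_pos v) y)).
Proof.
split=> [xC | inv1mx T y].
- have xC0 : xC 0%N = 0 by rewrite /xC fps_mul_coef0 mul0r.
  rewrite h_neg_comp // fps_mulKf //.
  by rewrite /fps_add /fps_const /fps_scale /= xC0 mulr0 addr0 oner_neq0.
- have y0 : y 0%N = 0.
    by rewrite /y /T /fps_add !fps_mul_coef0 fps_pow_coef_lt // !mul0r addr0.
  rewrite h_neg_comp //; congr fps_mul; apply: fps_ext => n.
  by rewrite /y /fps_add /fps_scale mulrDr addrA.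
Qed.
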